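(* Let $p\in(0,1)$ and let $\mathcal{F},\mathcal{G}\subseteq 2^{[n]}$ be cross-Sperner families. Then $\mu_p(\mathcal{F})^{1/2}+\mu_p(\mathcal{G})^{1/2}\le 1$.
   Context: Families $\mathcal{F},\mathcal{G}\subseteq 2^{[n]}$ are cross-Sperner if for all $F\in\mathcal{F}$ and $G\in\mathcal{G}$ neither $F\subseteq G$ nor $G\subseteq F$. For $p\in(0,1)$ and $F\subseteq[n]$, $\mu_p(F)=p^{|F|}(1-p)^{n-|F|}$, and $\mu_p(\mathcal{F})=\sum_{F\in\mathcal{F}}\mu_p(F)$. *)

From HB Require Import structures.
From mathcomp Require Import all_boot all_order all_algebra.
Set Implicit Arguments. Unset Strict Implicit. Unset Printing Implicit Defensive.
Import Order.TTheory GRing.Theory Num.Theory.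
Local Open Scope ring_scope.

Definition cross_sperner (n : nat) (F G : {set {set 'I_n}}) : Prop :=
  forall A B, A \in F -> B \in G -> ~~ (A \subset B) /\ ~~ (B \subset A).

Definition mu_p (R : numDomainType) (n : nat) (p : R) (A : {set 'I_n}) : R :=
  p ^+ #|A| * (1 - p) ^+ (n - #|A|).

Definition mu_p_fam (R : numDomainType) (n : nat) (p : R) (F : {set {set 'I_n}}) : R :=
  \sum_(A in F) mu_p p A.

From HB Require Import structures.
From mathcomp Require Import all_boot all_order all_algebra.
From mathcomp Require Import ring lra.

Set Implicit Arguments.
Unset Strict Implicit.
Unset Printing Implicit Defensive.

Import Order.TTheory GRing.Theory Num.Theory.
Local Open Scope ring_scope.

(* Write F^ and Fv for the up- and down-closures of F. By the Harris-Kleitman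
   inequality (an increasing and a decreasing family are negatively correlated
   under mu_p), mu(F) <= mu(F^ :&: Fv) <= mu(F^) mu(Fv), so by AM-GM
   sqrt mu(F) <= (mu(F^) + mu(Fv)) / 2.  Cross-Sperner says exactly that F^ is
   disjoint from Gv and G^ from Fv, so the four measures sum to at most 2.
   Harris's inequality is proved by induction on the ground set, conditioning
   on one coordinate. *)

Lemma setU1_ind (T : finType) (P : {set T} -> Prop) :
  P set0 -> (forall (x : T) (S : {set T}), x \notin S -> P S -> P (x |: S)) ->
  forall S, P S.
Proof.
move=> P0 PU S; elim: {S}#|S| {-2}S (erefl #|S|) => [|k IH] S cardS.
  by move/eqP: cardS; rewrite cards_eq0 => /eqP ->.
have [x xS] : exists x, x \in S by apply/set0Pn; rewrite -card_gt0 cardS.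
rewrite -(setD1K xS); apply: PU; first by rewrite setD11.
by apply: IH; move: cardS; rewrite (cardsD1 x) xS => -[].
Qed.

Lemma powersetU1 (T : finType) (x : T) (S : {set T}) : x \notin S ->
  powerset (x |: S) = powerset S :|: [set x |: A | A in powerset S].
Proof.
move=> xS; apply/setP => A; rewrite !inE; apply/idP/orP => [AxS|].
  have [xA|xA] := boolP (x \in A); [right|left].
    by apply/imsetP; exists (A :\ x); rewrite ?setD1K // inE subDset.
  by rewrite -(setU1K xS) subsetD1 AxS.
case=> [AS|/imsetP[B]]; first exact: subset_trans AS (subsetUr _ _).
by rewrite inE => BS ->; rewrite setUS.
Qed.

Section BiasedExpectation.
Variables (R : realDomainType) (T : finType) (p : R).
Hypotheses (p_ge0 : 0 <= p) (p_le1 : p <= 1).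
Implicit Types (x : T) (S A : {set T}).

Definition pweight (S A : {set T}) : R :=
  \prod_(i in S) (if i \in A then p else 1 - p).

Definition Ep (S : {set T}) (h : {set T} -> R) : R :=
  \sum_(A in powerset S) pweight S A * h A.

Lemma pweight_ge0 S A : 0 <= pweight S A.
Proof. by apply: prodr_ge0 => i _; case: ifP; rewrite ?subr_ge0. Qed.

Lemma pweightU1 x S A : x \notin S ->
  pweight (x |: S) A = (if x \in A then p else 1 - p) * pweight S A.
Proof. exact: big_setU1. Qed.

Lemma pweight_setU1_notin x S A : x \notin S ->
  pweight S (x |: A) = pweight S A.
Proof.
move=> xS; apply: eq_bigr => i iS; rewrite in_setU1.
by case: eqVneq iS xS => [-> ->|].
Qed.

Lemma Ep_set0 h : Ep set0 h = h set0.
Proof. by rewrite /Ep powerset0 big_set1 /pweight big_set0 mul1r. Qed.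

Lemma EpU1 x S h : x \notin S ->
  Ep (x |: S) h = Ep S (fun A => (1 - p) * h A + p * h (x |: A)).
Proof.
move=> xS; have xNA A : A \in powerset S -> x \notin A.
  by rewrite inE => /subsetP AS; apply: contra xS => /AS.
rewrite /Ep powersetU1 // (eq_bigl _ _ (fun A => in_setU A _ _)).
rewrite bigU /=; last first.
  rewrite disjoints_subset; apply/subsetP => A /xNA xA; rewrite in_setC.
  by apply: contra xA => /imsetP[B _ ->]; rewrite setU11.
rewrite big_imset /=; last first.
  by move=> A B /xNA xA /xNA xB AB; rewrite -(setU1K xA) -(setU1K xB) AB.
rewrite -big_split; apply: eq_bigr => A /xNA xA /=.
by rewrite !pweightU1 // pweight_setU1_notin // setU11 (negbTE xA); ring.
Qed.

Lemma Ep1 S : Ep S (fun=> 1) = 1.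
Proof.
elim/setU1_ind: S => [|x S xS IH]; first by rewrite Ep_set0.
by rewrite EpU1 // -[RHS]IH; apply: eq_bigr => A _; congr (_ * _); ring.
Qed.

Lemma ler_Ep S h1 h2 : (forall A, h1 A <= h2 A) -> Ep S h1 <= Ep S h2.
Proof. by move=> h12; apply: ler_sum => A _; rewrite ler_wpM2l ?pweight_ge0. Qed.

Lemma EpD S h1 h2 : Ep S (fun A => h1 A + h2 A) = Ep S h1 + Ep S h2.
Proof. by rewrite /Ep -big_split; apply: eq_bigr => A _; rewrite mulrDr. Qed.

Lemma harris S (f g : {set T} -> R) :
  {homo f : A B / A \subset B >-> A <= B} ->
  {homo g : A B / A \subset B >-> B <= A} ->
  Ep S (fun A => f A * g A) <= Ep S f * Ep S g.
Proof.
elim/setU1_ind: S f g => [|x S xS IH] f g f_up g_down; first by rewrite !Ep_set0.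
rewrite !EpU1 //.
set f' := fun A => (1 - p) * f A + p * f (x |: A).
set g' := fun A => (1 - p) * g A + p * g (x |: A).
apply: le_trans (IH f' g' _ _); last 2 first.
- move=> A B AB; apply: lerD; apply: ler_wpM2l; rewrite ?subr_ge0 //.
    exact: f_up.
  exact/f_up/setUS.
- move=> A B AB; apply: lerD; apply: ler_wpM2l; rewrite ?subr_ge0 //.
    exact: g_down.
  exact/g_down/setUS.
apply: ler_Ep => A; rewrite /f' /g' -subr_ge0.
have := f_up _ _ (subsetUr [set x] A); have := g_down _ _ (subsetUr [set x] A).
set f0 := f A; set f1 := f (x |: A); set g0 := g A; set g1 := g (x |: A).
move=> g10 f01.
(* Chebyshev's sum inequality on the two-point space {A, x |: A} *)
have -> : ((1 - p) * f0 + p * f1) * ((1 - p) * g0 + p * g1) -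
    ((1 - p) * (f0 * g0) + p * (f1 * g1)) = p * (1 - p) * ((f1 - f0) * (g0 - g1)).
  by ring.
by rewrite !mulr_ge0 ?subr_ge0.
Qed.

End BiasedExpectation.

Section UpDownSets.
Variable T : finType.
Implicit Types F U D : {set {set T}}.

Definition upset F : {set {set T}} :=
  [set B : {set T} | [exists A in F, A \subset B]].
Definition downset F : {set {set T}} :=
  [set B : {set T} | [exists A in F, B \subset A]].

Definition up_closed U := forall A B : {set T}, A \subset B -> A \in U -> B \in U.
Definition down_closed D := forall A B : {set T}, A \subset B -> B \in D -> A \in D.

Lemma upset_closed F : up_closed (upset F).
Proof.
move=> A B AB; rewrite !inE => /exists_inP[C CF CA].
by apply/exists_inP; exists C; rewrite ?(subset_trans CA AB).
Qed.

Lemma downset_closed F : down_closed (downset F).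
Proof.
move=> A B AB; rewrite !inE => /exists_inP[C CF BC].
by apply/exists_inP; exists C; rewrite ?(subset_trans AB BC).
Qed.

Lemma sub_upset F : F \subset upset F.
Proof. by apply/subsetP => A AF; rewrite inE; apply/exists_inP; exists A. Qed.

Lemma sub_downset F : F \subset downset F.
Proof. by apply/subsetP => A AF; rewrite inE; apply/exists_inP; exists A. Qed.

End UpDownSets.

Lemma cross_sperner_sym n (F G : {set {set 'I_n}}) :
  cross_sperner F G -> cross_sperner G F.
Proof. by move=> FG A B AG BF; have [] := FG B A BF AG. Qed.

Lemma cross_sperner_disjoint n (F G : {set {set 'I_n}}) :
  cross_sperner F G -> [disjoint upset F & downset G].
Proof.
move=> FG; rewrite disjoints_subset; apply/subsetP => X.
rewrite !inE => /exists_inP[A AF AX]; apply/exists_inP => -[B BG XB].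
by have [/negP[]] := FG A B AF BG; apply: subset_trans AX XB.
Qed.

Section BiasedMeasure.
Variables (R : realDomainType) (n : nat) (p : R).
Hypotheses (p_ge0 : 0 <= p) (p_le1 : p <= 1).
Implicit Types F G U D : {set {set 'I_n}}.

Lemma pweight_setT (A : {set 'I_n}) : pweight p [set: 'I_n] A = mu_p p A.
Proof.
rewrite /pweight /mu_p (eq_bigl predT) => [|i]; last by rewrite in_setT.
rewrite (bigID (mem A)) /= (eq_bigr (fun=> p)) => [|i ->] //.
rewrite [X in _ * X](eq_bigr (fun=> 1 - p)) => [|i /negbTE ->] //.
by rewrite !prodr_const -[n in (n - _)%N]card_ord -(cardC A) addKn.
Qed.

Lemma mu_p_famE F : mu_p_fam p F = Ep p [set: 'I_n] (fun A => (A \in F)%:R).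
Proof.
rewrite /mu_p_fam /Ep powersetT big_mkcond; apply: eq_big => [A|A _].
  by rewrite in_setT.
by rewrite pweight_setT; case: (A \in F); rewrite ?mulr1 ?mulr0.
Qed.

Lemma mu_p_fam_ge0 F : 0 <= mu_p_fam p F.
Proof. by apply: sumr_ge0 => A _; rewrite mulr_ge0 ?exprn_ge0 ?subr_ge0. Qed.

Lemma mu_p_famS F G : F \subset G -> mu_p_fam p F <= mu_p_fam p G.
Proof.
move=> /subsetP FG; rewrite !mu_p_famE; apply: ler_Ep => // A.
by case AF: (A \in F); rewrite ?(FG A AF).
Qed.

Lemma mu_p_fam_disjoint F G :
  [disjoint F & G] -> mu_p_fam p F + mu_p_fam p G <= 1.
Proof.
move=> FG; rewrite !mu_p_famE -EpD -[leRHS](Ep1 p [set: 'I_n]).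
apply: ler_Ep => // A.
by case AF: (A \in F); rewrite ?(disjointFr FG AF) ?addr0 // add0r lern1 leq_b1.
Qed.

Lemma harris_kleitman U D : up_closed U -> down_closed D ->
  mu_p_fam p (U :&: D) <= mu_p_fam p U * mu_p_fam p D.
Proof.
move=> Uup Ddown; rewrite !mu_p_famE.
apply: le_trans (harris p_ge0 p_le1 _ _ _) => [|A B AB|A B AB].
- by apply: ler_Ep => // A; rewrite in_setI -natrM mulnb.
- by rewrite ler_nat; case AU: (A \in U); rewrite ?(Uup A B AB AU).
- by rewrite ler_nat; case BD: (B \in D); rewrite ?(Ddown A B AB BD).
Qed.

Lemma mu_p_fam_le_updown F :
  mu_p_fam p F <= mu_p_fam p (upset F) * mu_p_fam p (downset F).
Proof.
apply: le_trans (harris_kleitman (@upset_closed _ F) (@downset_closed _ F)).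
by apply: mu_p_famS; rewrite subsetI sub_upset sub_downset.
Qed.

End BiasedMeasure.

Lemma sqrtrM_le_avg (R : rcfType) (a b : R) : 0 <= a -> 0 <= b ->
  Num.sqrt (a * b) <= (a + b) / 2.
Proof.
move=> a0 b0; rewrite -[leRHS]ger0_norm ?divr_ge0 ?addr_ge0 //.
by rewrite -sqrtr_sqr ler_sqrt ?sqr_ge0 ?leif_AGM2.
Qed.

Theorem theorem2p2 (R : rcfType) (n : nat) (p : R) (hp0 : 0 < p) (hp1 : p < 1)
  (F G : {set {set 'I_n}}) (hFG : cross_sperner F G) :
  Num.sqrt (mu_p_fam p F) + Num.sqrt (mu_p_fam p G) <= 1.
Proof.
have p_ge0 := ltW hp0; have p_le1 := ltW hp1.
have sqrt_mu_le (H : {set {set 'I_n}}) : Num.sqrt (mu_p_fam p H) <=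
    (mu_p_fam p (upset H) + mu_p_fam p (downset H)) / 2.
  apply: le_trans (sqrtrM_le_avg _ _); rewrite ?mu_p_fam_ge0 //.
  by rewrite ler_sqrt ?mulr_ge0 ?mu_p_fam_ge0 ?mu_p_fam_le_updown.
have := sqrt_mu_le F; have := sqrt_mu_le G.
have := mu_p_fam_disjoint p_ge0 p_le1 (cross_sperner_disjoint hFG).
have := mu_p_fam_disjoint p_ge0 p_le1
  (cross_sperner_disjoint (cross_sperner_sym hFG)).
lra.
Qed.
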